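(* Let $n\ge 1$ be an integer and let $P_n$ denote the path on $n$ vertices. For any $x\in\mathbb{N}$ and any integer $y$ with $0\le y\le x$, except for the case $x=y=1$, we have \[ P(P_n,x,y) = \frac{\sqrt{(x+1)^2-4y}-x-1}{2\sqrt{(x+1)^2-4y}}\cdot \left( \frac{x-1-\sqrt{(x+1)^2-4y}}{2} \right)^n + \frac{\sqrt{(x+1)^2-4y}+x+1}{2\sqrt{(x+1)^2-4y}}\cdot \left( \frac{x-1+\sqrt{(x+1)^2-4y}}{2} \right)^n . \]
   Context: For a finite simple graph $G=(V,E)$, $x\in\mathbb{N}$ and $y\in\{0,\dots,x\}$, the bivariate chromatic polynomial $P(G,x,y)$ is the number of maps $f:V\to\{1,\dots,x\}$ such that for every edge $\{v,w\}\in E$, either $f(v)\neq f(w)$ or $f(v)=f(w)>y$. (Equivalently: colorings in which adjacent vertices receive different colors or share a color from $\{y+1,\dots,x\}$.) *)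

From HB Require Import structures.
From mathcomp Require Import all_boot all_order all_algebra.
Set Implicit Arguments. Unset Strict Implicit. Unset Printing Implicit Defensive.
Import Order.TTheory GRing.Theory Num.Theory.

(* A finite simple graph is given by a symmetric irreflexive relation e on a
   finType T.  Colors {1,...,x} are represented by 'I_x, color c : 'I_x
   standing for the integer c+1.  Thus "f v = f w > y" becomes
   "f v = f w /\ y < (f v).+1". *)
Definition bcp (T : finType) (e : rel T) (x y : nat) : nat :=
  #|[set f : {ffun T -> 'I_x} |
      [forall v, forall w, e v w ==> ((f v != f w) || (y < (f v).+1))]]|.

Definition path_rel (n : nat) : rel 'I_n :=
  fun i j => (i.+1 == j :> nat) || (j.+1 == i :> nat).

From mathcomp Require Import all_boot all_order all_algebra zify ring.
Import Order.TTheory GRing.Theory Num.Theory.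

Set Implicit Arguments.
Unset Strict Implicit.
Unset Printing Implicit Defensive.

(* Colour the path from one end.  Let [A_n(a)] count the admissible colourings
   of the path on [n+1] vertices whose first vertex gets colour [a].  Adding a
   new first vertex coloured [a] forbids only the colour [a] on its neighbour,
   and only when [a] is one of the first [y] colours.  Hence the totals [S_n] and the partial sums [W_n]
   over these [y] colours obey [S_(n+1) = x S_n - W_n] and
   [W_(n+1) = y S_n - W_n], so [S_(n+2) = (x-1) S_(n+1) + (x-y) S_n].  The
   right-hand side of the theorem is the Binet solution of this recurrence,
   whose characteristic roots are [(x - 1 -+ d)/2]; it agrees with [S] at the
   two initial values.  Since [d^2 = (x-1)^2 + 4(x-y)], the excluded case
   [x = y = 1] is exactly the degenerate case [d = 0]. *)

Section PathColourings.

Variables x y : nat.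

Definition compatible (a b : 'I_x) : bool := (a != b) || (y < a.+1).

Lemma compatibleC (a b : 'I_x) : compatible a b = compatible b a.
Proof. by rewrite /compatible eq_sym; case: eqVneq => [->|]. Qed.

Definition path_colouring n (f : {ffun 'I_n.+1 -> 'I_x}) : bool :=
  [forall i : 'I_n, compatible (f (inord i)) (f (inord i.+1))].

Definition ncolour_from n (a : 'I_x) : nat :=
  #|[set f : {ffun 'I_n.+1 -> 'I_x} | path_colouring f && (f ord0 == a)]|.

Definition ncolour n : nat := \sum_(a : 'I_x) ncolour_from n a.

Definition fcons n (a : 'I_x) (g : {ffun 'I_n.+1 -> 'I_x}) : {ffun 'I_n.+2 -> 'I_x} :=
  [ffun i : 'I_n.+2 => if i : nat is k.+1 then g (inord k) else a].

Lemma bcp_path_colourings n :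
  bcp (@path_rel n.+1) x y = #|[set f : {ffun 'I_n.+1 -> 'I_x} | path_colouring f]|.
Proof.
apply: eq_card => f; rewrite !inE; apply/forallP/forallP => [colf i | colf v].
  have lt_in := ltn_ord i.
  apply: (implyP (forallP (colf (inord i)) (inord i.+1))).
  by rewrite /path_rel !inordK ?eqxx //; lia.
apply/forallP => w; apply/implyP; rewrite /path_rel => /orP[] /eqP vw.
  have lt_vn : (v < n)%N by have := ltn_ord w; lia.
  have := colf (Ordinal lt_vn); rewrite /= inord_val.
  by have -> : inord v.+1 = w by apply/val_inj; rewrite /= inordK vw.
have lt_wn : (w < n)%N by have := ltn_ord v; lia.
have := colf (Ordinal lt_wn); rewrite /= inord_val compatibleC.
by have -> : inord w.+1 = v by apply/val_inj; rewrite /= inordK vw.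
Qed.

Lemma bcp_path_ncolour n : bcp (@path_rel n.+1) x y = ncolour n.
Proof.
rewrite bcp_path_colourings -sum1_card.
rewrite (partition_big (fun f : {ffun 'I_n.+1 -> 'I_x} => f ord0) xpredT) //=.
by apply: eq_bigr => a _; rewrite /ncolour_from -sum1_card; apply: eq_bigl => f; rewrite !inE.
Qed.

Lemma ncolour_from0 (a : 'I_x) : ncolour_from 0 a = 1%N.
Proof.
rewrite /ncolour_from (_ : [set f | _] = [set [ffun=> a]]) ?cards1 //.
apply/setP => f; rewrite !inE (_ : path_colouring f); last by apply/forallP => -[].
apply/eqP/eqP => [<-|->]; last by rewrite ffunE.
by apply/ffunP => i; rewrite ffunE (ord1 i).
Qed.

Lemma fconsS n (a : 'I_x) (g : {ffun 'I_n.+1 -> 'I_x}) k :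
  (k < n.+1)%N -> fcons a g (inord k.+1) = g (inord k).
Proof. by move=> lt_kn; rewrite ffunE inordK. Qed.

Lemma fcons0 n (a : 'I_x) (g : {ffun 'I_n.+1 -> 'I_x}) : fcons a g (inord 0) = a.
Proof. by rewrite ffunE inordK. Qed.

Lemma path_colouring_fcons n (a : 'I_x) (g : {ffun 'I_n.+1 -> 'I_x}) :
  path_colouring (fcons a g) = compatible a (g ord0) && path_colouring g.
Proof.
have inord0 : inord 0 = ord0 :> 'I_n.+1 by apply/val_inj; rewrite /= inordK.
apply/forallP/andP => [colf | [col_a /forallP colg] [[|k] lt_kn]] /=.
- split; first by have := colf ord0; rewrite /= fcons0 fconsS // inord0.
  apply/forallP => i; have lt_in := ltn_ord i.
  have lt_i1n : (i.+1 < n.+1)%N by lia.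
  by have := colf (Ordinal lt_i1n); rewrite /= !fconsS //; lia.
- by rewrite fcons0 fconsS // inord0.
- have lt_k : (k < n)%N by lia.
  by have := colg (Ordinal lt_k); rewrite /= !fconsS //; lia.
Qed.

Lemma ncolour_fromS n (a : 'I_x) :
  ncolour_from n.+1 a = (\sum_(c | compatible a c) ncolour_from n c)%N.
Proof.
pose tail (f : {ffun 'I_n.+2 -> 'I_x}) := [ffun j : 'I_n.+1 => f (lift ord0 j)].
have fconsK : injective (@fcons n a).
  move=> g1 g2 eq_g; apply/ffunP => j.
  by have := congr1 (fun f => tail f j) eq_g; rewrite /= !ffunE /= inord_val.
rewrite /ncolour_from (_ : [set f | _] =
  fcons a @: [set g | path_colouring g && compatible a (g ord0)]); last first.
  apply/setP => f; rewrite inE; apply/andP/imsetP => [[colf /eqP f0] | [g]].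
    have tailK : fcons a (tail f) = f.
      apply/ffunP => -[[|k] lt_kn]; rewrite !ffunE /=.
        by rewrite -f0; apply/congr1/val_inj.
      by rewrite /tail ffunE; apply/congr1/val_inj; rewrite /= inordK.
    exists (tail f); last by rewrite tailK.
    by rewrite inE andbC -path_colouring_fcons tailK.
  by rewrite inE => /andP[colg col_a] ->; rewrite path_colouring_fcons col_a colg ffunE.
rewrite card_imset // -sum1_card.
rewrite (partition_big (fun g : {ffun 'I_n.+1 -> 'I_x} => g ord0) (compatible a)) /=;
  last by move=> g; rewrite inE => /andP[].
apply: eq_bigr => c col_ac; rewrite -sum1_card; apply: eq_bigl => g; rewrite !inE.
by case: eqVneq => [->|]; rewrite ?col_ac ?andbT ?andbF.
Qed.

Definition ncolour_proper n : nat := \sum_(a : 'I_x | (a < y)%N) ncolour_from n a.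

Lemma ncolour_fromS_add n (a : 'I_x) :
  (ncolour_from n.+1 a + (if (a < y)%N then ncolour_from n a else 0) = ncolour n)%N.
Proof.
rewrite ncolour_fromS /ncolour; case: ltnP => [lt_ay | le_ya].
  rewrite [in RHS](bigD1 a) //= addnC; congr (_ + _)%N; apply: eq_bigl => c.
  by rewrite /compatible eq_sym ltnS leqNgt lt_ay orbF.
by rewrite addn0; apply: eq_bigl => c; rewrite /compatible ltnS le_ya orbT.
Qed.

Hypothesis le_yx : (y <= x)%N.

Lemma card_ord_lt : #|[pred a : 'I_x | (a < y)%N]| = y.
Proof.
rewrite -sum1_card (eq_bigl (fun a : 'I_x => true && (a < y)%N)) //.
by rewrite -(big_ord_widen_cond _ (fun _ => true) (fun _ => 1%N)) // sum1_card card_ord.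
Qed.

Lemma ncolourS_add n : (ncolour n.+1 + ncolour_proper n = x * ncolour n)%N.
Proof.
rewrite /ncolour_proper (big_mkcond (fun a : 'I_x => (a < y)%N)) -big_split /=.
by under eq_bigr do rewrite ncolour_fromS_add; rewrite sum_nat_const card_ord.
Qed.

Lemma ncolour_properS_add n :
  (ncolour_proper n.+1 + ncolour_proper n = y * ncolour n)%N.
Proof.
rewrite /ncolour_proper -big_split /=.
rewrite (eq_bigr (fun=> ncolour n)) => [|a lt_ay]; last first.
  by rewrite -(ncolour_fromS_add n a) lt_ay.
by rewrite sum_nat_const card_ord_lt.
Qed.

Lemma ncolour0 : ncolour 0 = x.
Proof.
by rewrite /ncolour (eq_bigr _ (fun a _ => ncolour_from0 a)) sum_nat_const card_ord muln1.
Qed.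

Lemma ncolour_proper0 : ncolour_proper 0 = y.
Proof.
by rewrite /ncolour_proper (eq_bigr _ (fun a _ => ncolour_from0 a)) sum_nat_const card_ord_lt muln1.
Qed.

Lemma ncolour1 : (ncolour 1 + y = x * x)%N.
Proof. by rewrite -ncolour_proper0 ncolourS_add ncolour0. Qed.

Lemma ncolourSS_add n :
  (ncolour n.+2 + ncolour n.+1 + y * ncolour n = x * ncolour n.+1 + x * ncolour n)%N.
Proof.
by have := ncolourS_add n; have := ncolourS_add n.+1; have := ncolour_properS_add n; lia.
Qed.

End PathColourings.

Local Open Scope ring_scope.

Lemma linrec2_ext (R : pzSemiRingType) (p q : R) (u v : nat -> R) :
  (forall k, u k.+2 = p * u k.+1 + q * u k) ->
  (forall k, v k.+2 = p * v k.+1 + q * v k) ->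
  u 0%N = v 0%N -> u 1%N = v 1%N -> u =1 v.
Proof.
move=> recu recv eq0 eq1 k.
suff [] : u k = v k /\ u k.+1 = v k.+1 by [].
by elim: k => [|k [eqk eqk1]]; split; rewrite ?recu ?recv ?eqk ?eqk1.
Qed.

Lemma exprSS_linrec2 (R : comPzSemiRingType) (p q r : R) k :
  r ^+ 2 = p * r + q -> r ^+ k.+2 = p * r ^+ k.+1 + q * r ^+ k.
Proof. by move=> r2; rewrite -addn2 exprD r2 exprS; ring. Qed.

Lemma binet_linrec2 (R : comPzRingType) (p q r s a b : R) k :
  r ^+ 2 = p * r + q -> s ^+ 2 = p * s + q ->
  a * r ^+ k.+2 + b * s ^+ k.+2 =
    p * (a * r ^+ k.+1 + b * s ^+ k.+1) + q * (a * r ^+ k + b * s ^+ k).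
Proof. by move=> r2 s2; rewrite !(exprSS_linrec2 k r2, exprSS_linrec2 k s2); ring. Qed.

Lemma quadratic_root (F : fieldType) (p q d : F) :
  (2 : F) != 0 -> d ^+ 2 = p ^+ 2 + 4 * q -> ((p + d) / 2) ^+ 2 = p * ((p + d) / 2) + q.
Proof.
move=> two_neq0 d2; rewrite expr_div_n sqrrD d2; field.
by rewrite two_neq0 (_ : 4 = 2 * 2 :> F) ?mulf_neq0 //; ring.
Qed.

Theorem theorem1 (R : rcfType) (n x y : nat) :
  (1 <= n)%N -> (y <= x)%N -> ~ (x = 1%N /\ y = 1%N) ->
  let d : R := Num.sqrt ((x%:R + 1) ^+ 2 - 4 * y%:R) in
  (bcp (@path_rel n) x y)%:R =
    (d - x%:R - 1) / (2 * d) * ((x%:R - 1 - d) / 2) ^+ n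
  + (d + x%:R + 1) / (2 * d) * ((x%:R - 1 + d) / 2) ^+ n.
Proof.
move=> n_gt0 le_yx not_x1y1 d; case: n n_gt0 => // n _.
have disc_gt0 : (4 * y < (x + 1) ^ 2)%N.
  have [x1 | x_neq1] := eqVneq x 1%N; last by nia.
  have y_neq1 : y <> 1%N by move=> y1; exact: not_x1y1.
  by rewrite x1 in le_yx *; lia.
have disc_gt0R : 0 < (x%:R + 1) ^+ 2 - 4 * y%:R :> R.
  by rewrite subr_gt0; move: disc_gt0; rewrite -(ltr_nat R) natrM natrX natrD.
have d_gt0 : 0 < d by rewrite sqrtr_gt0.
have d2 : d ^+ 2 = (x%:R - 1) ^+ 2 + 4 * (x%:R - y%:R).
  by rewrite sqr_sqrtr ?ltW //; ring.
have two_neq0 : (2 : R) != 0 by rewrite pnatr_eq0.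
have d_neq0 : d != 0 by rewrite gt_eqF.
pose bin k := (d - x%:R - 1) / (2 * d) * ((x%:R - 1 - d) / 2) ^+ k
            + (d + x%:R + 1) / (2 * d) * ((x%:R - 1 + d) / 2) ^+ k.
pose col k : R := (ncolour x y k)%:R.
have rec_col k : col k.+2 = (x%:R - 1) * col k.+1 + (x%:R - y%:R) * col k.
  have := congr1 (GRing.natmul (1 : R)) (ncolourSS_add le_yx k).
  rewrite !(natrD, natrM) -/(col _) -/(col _) -/(col _) => eq_add.
  by rewrite -[col k.+2](addrK (col k.+1 + y%:R * col k)) addrA eq_add; ring.
have rec_bin k : bin k.+2 = (x%:R - 1) * bin k.+1 + (x%:R - y%:R) * bin k.
  by apply: binet_linrec2; apply: quadratic_root; rewrite // sqrrN.
have col1 : col 1%N = x%:R * x%:R - y%:R.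
  by rewrite /col -(addrK y%:R (ncolour x y 1)%:R) -natrD ncolour1 // natrM.
rewrite bcp_path_ncolour -/(col n).
apply: (linrec2_ext rec_col (fun k => rec_bin k.+1)) => /=.
  by rewrite /col ncolour0 /bin !expr1; field.
by rewrite col1 rec_bin /bin !expr1 !expr0; field.
Qed.
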